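(* In the tracking setting, fix $k\geq0$. If $\|s_{k+1}-s_k\|_2<r_B$, $\|\bar w_k-w^\ast_k\|_2<q_B\rho$ and $$\Big(1+\frac{\lambda_H\lambda_B}{\rho}\Big)\|\bar w_k-w^\ast_k\|_2+\lambda_H\lambda_B r_B<\delta,$$ then $$\|\bar w_{k+1}-w^\infty_k\|_2\leq C(1+\rho\lambda_G)M^{-\psi}\Big(\lambda_B\lambda_H\|s_{k+1}-s_k\|_2+\Big(1+\frac{\lambda_B\lambda_H}{\rho}\Big)\|\bar w_k-w^\ast_k\|_2\Big).$$
   Context: Problem data: $z=(z_1,\dots,z_P)\in\mathbb{R}^{n_z}$; $\mathcal{Z}=\mathcal{Z}_1\times\cdots\times\mathcal{Z}_P$ a product of nonempty bounded boxes; $J(z)=\sum_iJ_i(z_i)$ with polynomials $J_i$; polynomial maps $Q_c:\mathbb{R}^{n_z}\to\mathbb{R}^m$, $g_i:\mathbb{R}^{n_i}\to\mathbb{R}^{q_i}$; $T_i\in\mathbb{R}^{q_i\times p}$; $q=\sum q_i$; $\mathcal{S}\subseteq\mathbb{R}^p$; $G(z,s)=(Q_c(z),g_1(z_1)+T_1s,\dots,g_P(z_P)+T_Ps)$; $L_\rho(z,\mu,s)=J(z)+(\mu+\frac\rho2G(z,s))^\top G(z,s)$; for $w=(z,\mu)$, $F(w,s)=(\nabla J(z)+\nabla_zG(z,s)^\top\mu,\ G(z,s))$; $\mathcal{N}:=\mathcal{N}_{\mathcal{Z}\times\mathbb{R}^{m+q}}$. A KKT point of $(P_s)$: $\min J(z)$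 s.t. $G(z,s)=0$, $z\in\mathcal{Z}$, is $w$ with $0\in F(w,s)+\mathcal{N}(w)$. For a reference multiplier $\tilde\mu$: $H^{\tilde\mu}_\rho(w,d,s):=(\nabla J(z)+\nabla_zG(z,s)^\top\mu,\ G(z,s)+d+(\tilde\mu-\mu)/\rho)$. Constants: $\lambda_F:=P\max_i\|T_i\|_2$; $\lambda_H>0$ with $\|H^{\tilde\mu}_\rho(w,d,s)-H^{\tilde\mu}_\rho(w,d',s')\|\le\lambda_H\|(d,s)-(d',s')\|$ for all arguments; $\lambda_G>0$ a Lipschitz constant of $z\mapsto G(z,s)$ on $\mathcal{Z}$ (independent of $s$). Primal sweep on $L_\rho(\cdot,\mu,s)$: block-coordinate projected-gradient pass over $i=1,\dots,P$ in order, each block update $z_i\leftarrow\pi_{\mathcal{Z}_i}(z_i-\frac1{c_i}\nabla_{z_i}L_\rho)$ (gradient evaluated with already updated preceding blocks) with curvature $c_i$ obtained by backtracking (multiply by $\beta>1$ from an initial $c_i^0>0$) until $f(u)+\frac{\alpha_i}2\|u-z_i\|^2\le f(z_i)+\nabla f(z_i)^\top(u-z_i)+\frac{c_i}2\|u-z_i\|^2$ for the block function $f$, with $\alpha_i>0$. Tracking setting: fix $\rho>0$, $M\ge1$. Given parameters $(s_k)_{k\ge0}\subset\mathcal{S}$ and KKT points $w^\ast_k=(z^\ast_k,\mu^\ast_k)$ of $(P_{s_k})$. Iterates $\bar w_k=(\bar z_k,\bar\mu_k)$ with $\bar z_k\in\mathcal{Z}$ are produced by: $\bar z_{k+1}$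 = result of $M$ successive primal sweeps on $L_\rho(\cdot,\bar\mu_k,s_{k+1})$ started at $\bar z_k$; $\bar\mu_{k+1}=\bar\mu_k+\rho G(\bar z_{k+1},s_{k+1})$. Let $z^\infty_k$ be the limit of infinitely many sweeps on $L_\rho(\cdot,\bar\mu_k,s_{k+1})$ started at $\bar z_k$, and $w^\infty_k:=(z^\infty_k,\ \bar\mu_k+\rho G(z^\infty_k,s_{k+1}))$; $d_k:=(\bar\mu_k-\mu^\ast_k)/\rho$. Standing hypotheses, for every $k$: (A) there are constants $r_A,\delta_A,\lambda_A>0$ (independent of $k$) such that for every $s\in\mathcal{B}(s_k,r_A)\cap\mathcal{S}$ there is a unique $w^\ast(s)\in\mathcal{B}(w^\ast_k,\delta_A)$ with $0\in F(w^\ast(s),s)+\mathcal{N}(w^\ast(s))$, for all $s,s'\in\mathcal{B}(s_k,r_A)\cap\mathcal{S}$ one has $\|w^\ast(s)-w^\ast(s')\|\le\lambda_A\|F(w^\ast(s'),s)-F(w^\ast(s'),s')\|$, and $w^\ast_{k+1}=w^\ast(s_{k+1})$ whenever $\|s_{k+1}-s_k\|<r_A$; (B) there are constants $r_B,q_B,\lambda_B>0$ and $\delta_B\ge\delta_A$ (independent of $k$) such that for all $d\in\mathcal{B}(0,q_B)$, $s\in\mathcal{B}(s_k,r_B)\cap\mathcal{S}$ there is a unique $w^\ast_k(d,s)\in\mathcal{B}(w^\ast_k,\delta_B)$ with $0\in H^{\mu^\ast_k}_\rho(w^\ast_k(d,s),d,s)+\mathcal{N}(w^\ast_k(d,s))$,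 and $\|w^\ast_k(d,s)-w^\ast_k(d',s')\|\le\lambda_B\|H^{\mu^\ast_k}_\rho(w^\ast_k(d',s'),d,s)-H^{\mu^\ast_k}_\rho(w^\ast_k(d',s'),d',s')\|$ for all such $d,d',s,s'$; (C) there are constants $C>0$, $\delta>0$, $\psi>0$ (independent of $k$) such that the sequence of sweeps defining $z^\infty_k$ converges, $w^\infty_k=w^\ast_k(d_k,s_{k+1})$ whenever $d_k\in\mathcal{B}(0,q_B)$ and $\|s_{k+1}-s_k\|<r_B$, and if $\|\bar z_k-z^\infty_k\|<\delta$ then $\|\bar z_{k+1}-z^\infty_k\|\le CM^{-\psi}\|\bar z_k-z^\infty_k\|$. (In the paper, $\psi=\psi(d_L,n_z)=1/(d_L(3d_L-3)^{n_z-1}-2)$ with $d_L$ the degree of the augmented Lagrangian.) *)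

From Stdlib Require Import Reals Lra List ClassicalEpsilon.
Open Scope R_scope.

(* A vector of R^n is a function nat -> R of which only the
   coordinates 0..n-1 are meaningful.  Block vectors z = (z_1,...,z_P)
   with z_i in R^{n_i} are functions nat -> nat -> R (block i, coord j). *)
Definition vec := nat -> R.
Definition bvec := nat -> nat -> R.
(* constraint / multiplier space R^m x R^{q_1} x ... x R^{q_P} = R^{m+q} *)
Definition cvec := (vec * bvec)%type.
(* primal-dual points w = (z, mu) *)
Definition pdvec := (bvec * cvec)%type.

Fixpoint lsum {A : Type} (l : list A) (f : A -> R) : R :=
  match l with nil => 0 | a :: l' => f a + lsum l' f end.
Fixpoint lprod {A : Type} (l : list A) (f : A -> R) : R :=
  match l with nil => 1 | a :: l' => f a * lprod l' f end.

Definition bvars (P : nat) (dims : nat -> nat) : list (nat * nat) :=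
  flat_map (fun i => map (fun j => (i, j)) (seq 0 (dims i))) (seq 0 P).

Definition is_vpoly (n : nat) (f : vec -> R) : Prop :=
  exists mons : list (R * (nat -> nat)),
    forall x : vec, f x = lsum mons (fun ce =>
      fst ce * lprod (seq 0 n) (fun j => x j ^ (snd ce j))).
Definition is_bpoly (vars : list (nat * nat)) (f : bvec -> R) : Prop :=
  exists mons : list (R * (nat -> nat -> nat)),
    forall z : bvec, f z = lsum mons (fun ce =>
      fst ce * lprod vars (fun v => z (fst v) (snd v) ^ (snd ce (fst v) (snd v)))).

Record problem := Problem {
  nP : nat;
  ndim : nat -> nat;
  mdim : nat;
  qdim : nat -> nat;
  pdim : nat;
  Jb : nat -> vec -> R;
  Qc : bvec -> vec;
  gb : nat -> vec -> vec;
  Tb : nat -> nat -> nat -> R;    (* T_i in R^{q_i x p}, entry (j,l) *)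
  lo : bvec; hi : bvec;           (* Z_i = prod_j [lo i j, hi i j] *)
  Sset : vec -> Prop
}.

Definition zvars (pb : problem) := bvars (nP pb) (ndim pb).
Definition gvars (pb : problem) := bvars (nP pb) (qdim pb).

Definition problem_wf (pb : problem) : Prop :=
  (forall i j, (i < nP pb)%nat -> (j < ndim pb i)%nat -> lo pb i j <= hi pb i j) /\
  (forall i, (i < nP pb)%nat -> is_vpoly (ndim pb i) (Jb pb i)) /\
  (forall r, (r < mdim pb)%nat -> is_bpoly (zvars pb) (fun z => Qc pb z r)) /\
  (forall i r, (i < nP pb)%nat -> (r < qdim pb i)%nat ->
     is_vpoly (ndim pb i) (fun x => gb pb i x r)).

Definition vsub (x y : vec) : vec := fun j => x j - y j.
Definition bsub (x y : bvec) : bvec := fun i j => x i j - y i j.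
Definition cadd (x y : cvec) : cvec :=
  (fun r => fst x r + fst y r, fun i j => snd x i j + snd y i j).
Definition cscal (a : R) (x : cvec) : cvec :=
  (fun r => a * fst x r, fun i j => a * snd x i j).
Definition csub (x y : cvec) : cvec := cadd x (cscal (-1) y).
Definition wsub (x y : pdvec) : pdvec := (bsub (fst x) (fst y), csub (snd x) (snd y)).
Definition wopp (x : pdvec) : pdvec :=
  (fun i j => - fst x i j, cscal (-1) (snd x)).

Definition vdot (n : nat) (x y : vec) : R := lsum (seq 0 n) (fun j => x j * y j).
Definition zdot (pb : problem) (x y : bvec) : R :=
  lsum (zvars pb) (fun v => x (fst v) (snd v) * y (fst v) (snd v)).
Definition cdot (pb : problem) (x y : cvec) : R :=
  lsum (seq 0 (mdim pb)) (fun r => fst x r * fst y r)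
  + lsum (gvars pb) (fun v => snd x (fst v) (snd v) * snd y (fst v) (snd v)).
Definition wdot (pb : problem) (x y : pdvec) : R :=
  zdot pb (fst x) (fst y) + cdot pb (snd x) (snd y).

Definition snorm (pb : problem) (x : vec) : R := sqrt (vdot (pdim pb) x x).
Definition znorm (pb : problem) (x : bvec) : R := sqrt (zdot pb x x).
Definition cnorm (pb : problem) (x : cvec) : R := sqrt (cdot pb x x).
Definition wnorm (pb : problem) (x : pdvec) : R := sqrt (wdot pb x x).
Definition dsnorm (pb : problem) (d : cvec) (s : vec) : R :=
  sqrt (cdot pb d d + vdot (pdim pb) s s).

(* equality of primal-dual points (on their meaningful coordinates) *)
Definition weq (pb : problem) (w w' : pdvec) : Prop :=
  (forall i j, (i < nP pb)%nat -> (j < ndim pb i)%nat -> fst w i j = fst w' i j) /\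
  (forall r, (r < mdim pb)%nat -> fst (snd w) r = fst (snd w') r) /\
  (forall i j, (i < nP pb)%nat -> (j < qdim pb i)%nat -> snd (snd w) i j = snd (snd w') i j).

Definition vupd (x : vec) (j : nat) (t : R) : vec :=
  fun j' => if Nat.eqb j' j then t else x j'.
Definition bupd (z : bvec) (i j : nat) (t : R) : bvec :=
  fun i' j' => if andb (Nat.eqb i' i) (Nat.eqb j' j) then t else z i' j'.
Definition vpderiv (f : vec -> R) (x : vec) (j : nat) : R :=
  epsilon (inhabits 0) (fun l => derivable_pt_lim (fun t => f (vupd x j t)) (x j) l).
Definition pderiv (f : bvec -> R) (z : bvec) (i j : nat) : R :=
  epsilon (inhabits 0) (fun l => derivable_pt_lim (fun t => f (bupd z i j t)) (z i j) l).

Definition Jfun (pb : problem) (z : bvec) : R :=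
  lsum (seq 0 (nP pb)) (fun i => Jb pb i (z i)).
Definition Gfun (pb : problem) (z : bvec) (s : vec) : cvec :=
  (Qc pb z,
   fun i j => gb pb i (z i) j + lsum (seq 0 (pdim pb)) (fun l => Tb pb i j l * s l)).
Definition Lag (pb : problem) (rho : R) (z : bvec) (mu : cvec) (s : vec) : R :=
  Jfun pb z + cdot pb (cadd mu (cscal (rho / 2) (Gfun pb z s))) (Gfun pb z s).
Definition gradJG (pb : problem) (z : bvec) (mu : cvec) (s : vec) : bvec :=
  fun i j =>
    pderiv (Jfun pb) z i j
    + lsum (seq 0 (mdim pb))
        (fun r => pderiv (fun z' => fst (Gfun pb z' s) r) z i j * fst mu r)
    + lsum (gvars pb)
        (fun v => pderiv (fun z' => snd (Gfun pb z' s) (fst v) (snd v)) z i j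
                  * snd mu (fst v) (snd v)).
Definition Fmap (pb : problem) (w : pdvec) (s : vec) : pdvec :=
  (gradJG pb (fst w) (snd w) s, Gfun pb (fst w) s).
Definition Hmap (pb : problem) (rho : R) (mut : cvec) (w : pdvec) (d : cvec) (s : vec)
  : pdvec :=
  (gradJG pb (fst w) (snd w) s,
   cadd (cadd (Gfun pb (fst w) s) d) (cscal (/ rho) (csub mut (snd w)))).

Definition inZ (pb : problem) (z : bvec) : Prop :=
  forall i j, (i < nP pb)%nat -> (j < ndim pb i)%nat -> lo pb i j <= z i j <= hi pb i j.
Definition inZi (pb : problem) (i : nat) (u : vec) : Prop :=
  forall j, (j < ndim pb i)%nat -> lo pb i j <= u j <= hi pb i j.
Definition inZR (pb : problem) (w : pdvec) : Prop := inZ pb (fst w).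
Definition normal_cone (pb : problem) (w v : pdvec) : Prop :=
  inZR pb w /\ forall y, inZR pb y -> wdot pb v (wsub y w) <= 0.
Definition zero_in_plus_N (pb : problem) (T w : pdvec) : Prop :=
  normal_cone pb w (wopp T).
Definition KKT (pb : problem) (w : pdvec) (s : vec) : Prop :=
  zero_in_plus_N pb (Fmap pb w s) w.

Definition is_proj_Zi (pb : problem) (i : nat) (x u : vec) : Prop :=
  inZi pb i u /\ forall y, inZi pb i y ->
    vdot (ndim pb i) (vsub u x) (vsub u x) <= vdot (ndim pb i) (vsub y x) (vsub y x).
Definition proj_Zi (pb : problem) (i : nat) (x : vec) : vec :=
  epsilon (inhabits (fun _ : nat => 0)) (is_proj_Zi pb i x).

Definition block_fun (f : bvec -> R) (z : bvec) (i : nat) (u : vec) : R :=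
  f (fun i' => if Nat.eqb i' i then u else z i').
Definition block_grad (f : bvec -> R) (z : bvec) (i : nat) : vec :=
  fun j => vpderiv (block_fun f z i) (z i) j.
Definition block_trial (pb : problem) (f : bvec -> R) (z : bvec) (i : nat) (c : R) : vec :=
  proj_Zi pb i (fun j => z i j - / c * block_grad f z i j).
Definition bt_accept (pb : problem) (f : bvec -> R) (alpha c : R) (z : bvec) (i : nat)
  : Prop :=
  let fi := block_fun f z i in
  let u := block_trial pb f z i c in
  let n := ndim pb i in
  fi u + alpha / 2 * vdot n (vsub u (z i)) (vsub u (z i))
  <= fi (z i) + vdot n (block_grad f z i) (vsub u (z i))
     + c / 2 * vdot n (vsub u (z i)) (vsub u (z i)).
Definition block_step (pb : problem) (f : bvec -> R) (alpha c0 : nat -> R) (beta : R)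
  (i : nat) (z z' : bvec) : Prop :=
  exists e : nat,
    bt_accept pb f (alpha i) (c0 i * beta ^ e) z i /\
    (forall e', (e' < e)%nat -> ~ bt_accept pb f (alpha i) (c0 i * beta ^ e') z i) /\
    z' = (fun i' => if Nat.eqb i' i then block_trial pb f z i (c0 i * beta ^ e) else z i').
Definition sweep (pb : problem) (f : bvec -> R) (alpha c0 : nat -> R) (beta : R)
  (z z' : bvec) : Prop :=
  exists zs : nat -> bvec,
    zs 0%nat = z /\
    (forall i, (i < nP pb)%nat -> block_step pb f alpha c0 beta i (zs i) (zs (S i))) /\
    zs (nP pb) = z'.

(* ztraj k n = n-th sweep iterate on L_rho(., mubar_k, s_{k+1}) started at zbar_k *)
Definition tracking_iterates (pb : problem) (rho : R) (M : nat) (alpha c0 : nat -> R)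
  (beta : R) (s : nat -> vec) (wbar : nat -> pdvec) (ztraj : nat -> nat -> bvec) : Prop :=
  forall k,
    ztraj k 0%nat = fst (wbar k) /\
    (forall n, sweep pb (fun z => Lag pb rho z (snd (wbar k)) (s (S k))) alpha c0 beta
                 (ztraj k n) (ztraj k (S n))) /\
    fst (wbar (S k)) = ztraj k M /\
    snd (wbar (S k)) = cadd (snd (wbar k)) (cscal rho (Gfun pb (fst (wbar (S k))) (s (S k)))).

Definition winf (pb : problem) (rho : R) (s : nat -> vec) (wbar : nat -> pdvec)
  (zinf : nat -> bvec) (k : nat) : pdvec :=
  (zinf k, cadd (snd (wbar k)) (cscal rho (Gfun pb (zinf k) (s (S k))))).
Definition dk (rho : R) (wbar wstar : nat -> pdvec) (k : nat) : cvec :=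
  cscal (/ rho) (csub (snd (wbar k)) (snd (wstar k))).

Definition H_lipschitz (pb : problem) (rho lamH : R) : Prop :=
  0 < lamH /\
  forall mut w d d' s s',
    wnorm pb (wsub (Hmap pb rho mut w d s) (Hmap pb rho mut w d' s'))
    <= lamH * dsnorm pb (csub d d') (vsub s s').

Definition G_lipschitz (pb : problem) (lamG : R) : Prop :=
  0 < lamG /\
  forall s z z', inZ pb z -> inZ pb z' ->
    cnorm pb (csub (Gfun pb z s) (Gfun pb z' s)) <= lamG * znorm pb (bsub z z').

(* Hypothesis (A); wA k s plays the role of w^*(s) around w^*_k *)
Definition hypA (pb : problem) (s : nat -> vec) (wstar : nat -> pdvec)
  (rA dA lamA : R) (wA : nat -> vec -> pdvec) : Prop :=
  0 < rA /\ 0 < dA /\ 0 < lamA /\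
  forall k,
    (forall s', snorm pb (vsub s' (s k)) < rA -> Sset pb s' ->
       wnorm pb (wsub (wA k s') (wstar k)) < dA /\ KKT pb (wA k s') s' /\
       (forall w, wnorm pb (wsub w (wstar k)) < dA -> KKT pb w s' -> weq pb w (wA k s'))) /\
    (forall s1 s2, snorm pb (vsub s1 (s k)) < rA -> Sset pb s1 ->
       snorm pb (vsub s2 (s k)) < rA -> Sset pb s2 ->
       wnorm pb (wsub (wA k s1) (wA k s2))
       <= lamA * wnorm pb (wsub (Fmap pb (wA k s2) s1) (Fmap pb (wA k s2) s2))) /\
    (snorm pb (vsub (s (S k)) (s k)) < rA -> weq pb (wstar (S k)) (wA k (s (S k)))).

(* Hypothesis (B); wB k d s plays the role of w^*_k(d,s) *)
Definition hypB (pb : problem) (rho : R) (s : nat -> vec) (wstar : nat -> pdvec)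
  (dA rB qB lamB dB : R) (wB : nat -> cvec -> vec -> pdvec) : Prop :=
  0 < rB /\ 0 < qB /\ 0 < lamB /\ dA <= dB /\
  forall k,
    let H := Hmap pb rho (snd (wstar k)) in
    (forall d s', cnorm pb d < qB -> snorm pb (vsub s' (s k)) < rB -> Sset pb s' ->
       wnorm pb (wsub (wB k d s') (wstar k)) < dB /\
       zero_in_plus_N pb (H (wB k d s') d s') (wB k d s') /\
       (forall w, wnorm pb (wsub w (wstar k)) < dB -> zero_in_plus_N pb (H w d s') w ->
          weq pb w (wB k d s'))) /\
    (forall d1 s1 d2 s2,
       cnorm pb d1 < qB -> snorm pb (vsub s1 (s k)) < rB -> Sset pb s1 ->
       cnorm pb d2 < qB -> snorm pb (vsub s2 (s k)) < rB -> Sset pb s2 ->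
       wnorm pb (wsub (wB k d1 s1) (wB k d2 s2))
       <= lamB * wnorm pb (wsub (H (wB k d2 s2) d1 s1) (H (wB k d2 s2) d2 s2))).

Definition hypC (pb : problem) (rho : R) (M : nat) (s : nat -> vec)
  (wstar wbar : nat -> pdvec) (ztraj : nat -> nat -> bvec) (zinf : nat -> bvec)
  (rB qB : R) (wB : nat -> cvec -> vec -> pdvec) (C delta psi : R) : Prop :=
  0 < C /\ 0 < delta /\ 0 < psi /\
  forall k,
    (forall eps, 0 < eps -> exists N, forall n, (N <= n)%nat ->
       znorm pb (bsub (ztraj k n) (zinf k)) < eps) /\
    (cnorm pb (dk rho wbar wstar k) < qB -> snorm pb (vsub (s (S k)) (s k)) < rB ->
       weq pb (winf pb rho s wbar zinf k) (wB k (dk rho wbar wstar k) (s (S k)))) /\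
    (znorm pb (bsub (fst (wbar k)) (zinf k)) < delta ->
       znorm pb (bsub (fst (wbar (S k))) (zinf k))
       <= C * Rpower (INR M) (- psi) * znorm pb (bsub (fst (wbar k)) (zinf k))).

(* The regularised KKT system H = 0 has the solution map (d, s) |-> w*_k(d, s) of
   hypothesis (B), which passes through w*_k at (0, s_k) and through w^oo_k at
   (d_k, s_{k+1}); its Lipschitz bound, together with that of H, places w^oo_k within
   lamB lamH (|d_k| + |s_{k+1} - s_k|) of w*_k, where |d_k| <= |wbar_k - w*_k| / rho.
   Hence zbar_k starts inside the delta-ball of the sweep contraction (C), which
   shrinks the primal error by C M^-psi; the multiplier error is rho times a difference
   of constraint values and costs an extra factor rho lamG. *)
From Stdlib Require Import Reals Lra Lia List FunctionalExtensionality.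
Open Scope R_scope.

Lemma sqrt_add_le (a b : R) : 0 <= a -> 0 <= b -> sqrt (a + b) <= sqrt a + sqrt b.
Proof.
  intros Ha Hb.
  pose proof (sqrt_sqrt a Ha); pose proof (sqrt_sqrt b Hb).
  pose proof (sqrt_pos a); pose proof (sqrt_pos b).
  rewrite <- (sqrt_square (sqrt a + sqrt b)) by lra.
  apply sqrt_le_1_alt; nra.
Qed.

Lemma quadratic_ge0_discriminant (a b c : R) :
  0 <= c -> (forall t, 0 <= a + 2 * t * b + t * t * c) -> b * b <= a * c.
Proof.
  intros Hc Hq.
  destruct Hc as [Hc|Hc].
  - specialize (Hq (- b / c)).
    assert (E : c * (a + 2 * (- b / c) * b + - b / c * (- b / c) * c) = a * c - b * b)
      by (field; lra).
    nra.
  - subst c. destruct (Req_dec b 0) as [->|Hb]; [nra|].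
    specialize (Hq (- (a + 1) / (2 * b))).
    replace (a + 2 * (- (a + 1) / (2 * b)) * b + - (a + 1) / (2 * b) * (- (a + 1) / (2 * b)) * 0)
      with (-1) in Hq by (field; lra).
    lra.
Qed.

Section ListNorm.
Context {A : Type}.
Implicit Types (l : list A) (f g : A -> R).

Lemma lsum_app l1 l2 f : lsum (l1 ++ l2) f = lsum l1 f + lsum l2 f.
Proof. induction l1; simpl; [ring | rewrite IHl1; ring]. Qed.

Lemma lsum_ext_in l f g : (forall a, In a l -> f a = g a) -> lsum l f = lsum l g.
Proof. induction l; simpl; intros H; auto. rewrite H, IHl; auto. Qed.

Lemma lsum_ext l f g : (forall a, f a = g a) -> lsum l f = lsum l g.
Proof. intros; apply lsum_ext_in; auto. Qed.

Lemma lsum_add l f g : lsum l (fun a => f a + g a) = lsum l f + lsum l g.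
Proof. induction l; simpl; [ring | rewrite IHl; ring]. Qed.

Lemma lsum_scal l c f : lsum l (fun a => c * f a) = c * lsum l f.
Proof. induction l; simpl; [ring | rewrite IHl; ring]. Qed.

Lemma lsum_ge0 l f : (forall a, 0 <= f a) -> 0 <= lsum l f.
Proof. induction l; simpl; intros H; [lra|]. pose proof (H a); pose proof (IHl H); lra. Qed.

Lemma lsum_sq_ge0 l f : 0 <= lsum l (fun a => f a * f a).
Proof. apply lsum_ge0; intros; nra. Qed.

Definition lnorm l f : R := sqrt (lsum l (fun a => f a * f a)).

Lemma lnorm_ge0 l f : 0 <= lnorm l f.
Proof. apply sqrt_pos. Qed.

Lemma lnorm_ext_in l f g : (forall a, In a l -> f a = g a) -> lnorm l f = lnorm l g.
Proof. intros H; unfold lnorm; f_equal; apply lsum_ext_in; intros a Ha; rewrite H; auto. Qed.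

Lemma lnorm_ext l f g : (forall a, f a = g a) -> lnorm l f = lnorm l g.
Proof. intros; apply lnorm_ext_in; auto. Qed.

Lemma lnorm0 l f : (forall a, f a = 0) -> lnorm l f = 0.
Proof.
  intros H; unfold lnorm. rewrite <- sqrt_0. f_equal.
  induction l; simpl; [easy|]. rewrite IHl, H; ring.
Qed.

Lemma lnorm_scal l c f : lnorm l (fun a => c * f a) = Rabs c * lnorm l f.
Proof.
  unfold lnorm. rewrite (lsum_ext l _ (fun a => (c * c) * (f a * f a))) by (intros; ring).
  rewrite lsum_scal, sqrt_mult by (try apply lsum_sq_ge0; nra).
  now rewrite <- (sqrt_Rsqr_abs c).
Qed.

Lemma lsum_Cauchy_Schwarz l f g : lsum l (fun a => f a * g a) <= lnorm l f * lnorm l g.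
Proof.
  set (b := lsum l (fun a => f a * g a)).
  assert (Hb2 : b * b <= lsum l (fun a => f a * f a) * lsum l (fun a => g a * g a)).
  { apply quadratic_ge0_discriminant; [apply lsum_sq_ge0|]; intros t.
    unfold b; rewrite <- !lsum_scal, <- !lsum_add.
    eapply Rle_trans; [apply (lsum_sq_ge0 l (fun a => f a + t * g a))|].
    right; apply lsum_ext; intros; ring. }
  unfold lnorm. rewrite <- sqrt_mult by apply lsum_sq_ge0.
  eapply Rle_trans; [apply Rle_abs|].
  rewrite <- sqrt_Rsqr_abs. apply sqrt_le_1_alt. exact Hb2.
Qed.

Lemma lnorm_add_le l f g : lnorm l (fun a => f a + g a) <= lnorm l f + lnorm l g.
Proof.
  pose proof (lsum_Cauchy_Schwarz l f g).
  pose proof (sqrt_sqrt _ (lsum_sq_ge0 l f)) as Ef.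
  pose proof (sqrt_sqrt _ (lsum_sq_ge0 l g)) as Eg.
  fold (lnorm l f) in Ef; fold (lnorm l g) in Eg.
  pose proof (lnorm_ge0 l f); pose proof (lnorm_ge0 l g).
  unfold lnorm at 1.
  rewrite (lsum_ext l _ (fun a => f a * f a + (2 * (f a * g a) + g a * g a))) by (intros; ring).
  rewrite !lsum_add, lsum_scal.
  rewrite <- (sqrt_square (lnorm l f + lnorm l g)) by lra.
  apply sqrt_le_1_alt; nra.
Qed.

Lemma lnorm_sub_triangle l f g h :
  lnorm l (fun a => f a - h a) <= lnorm l (fun a => f a - g a) + lnorm l (fun a => g a - h a).
Proof.
  rewrite (lnorm_ext l _ (fun a => (f a - g a) + (g a - h a))) by (intros; ring).
  apply lnorm_add_le.
Qed.

Lemma lnorm_sub_sym l f g : lnorm l (fun a => f a - g a) = lnorm l (fun a => g a - f a).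
Proof. unfold lnorm; f_equal; apply lsum_ext; intros; ring. Qed.

Lemma lnorm_app_le l1 l2 f : lnorm (l1 ++ l2) f <= lnorm l1 f + lnorm l2 f.
Proof. unfold lnorm; rewrite lsum_app; apply sqrt_add_le; apply lsum_sq_ge0. Qed.

Lemma lnorm_app_l l1 l2 f : lnorm l1 f <= lnorm (l1 ++ l2) f.
Proof. unfold lnorm; rewrite lsum_app. apply sqrt_le_1_alt. pose proof (lsum_sq_ge0 l2 f); lra. Qed.

Lemma lnorm_app_r l1 l2 f : lnorm l2 f <= lnorm (l1 ++ l2) f.
Proof. unfold lnorm; rewrite lsum_app. apply sqrt_le_1_alt. pose proof (lsum_sq_ge0 l1 f); lra. Qed.

End ListNorm.

Lemma lsum_map {A B} (h : A -> B) (l : list A) (f : B -> R) :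
  lsum (map h l) f = lsum l (fun a => f (h a)).
Proof. induction l; simpl; congruence. Qed.

Lemma lnorm_map {A B} (h : A -> B) (l : list A) (f : B -> R) :
  lnorm (map h l) f = lnorm l (fun a => f (h a)).
Proof. unfold lnorm; now rewrite lsum_map. Qed.

(* The meaningful coordinates of constraint vectors and primal-dual points as index
   lists: cnorm and wnorm are lnorm over them. *)
Definition cidx (pb : problem) : list (nat + nat * nat) :=
  map inl (seq 0 (mdim pb)) ++ map inr (gvars pb).
Definition ccoord (x : cvec) (a : nat + nat * nat) : R :=
  match a with inl r => fst x r | inr v => snd x (fst v) (snd v) end.
Definition widx (pb : problem) : list (nat * nat + (nat + nat * nat)) :=
  map inl (zvars pb) ++ map inr (cidx pb).
Definition wcoord (x : pdvec) (a : nat * nat + (nat + nat * nat)) : R :=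
  match a with inl v => fst x (fst v) (snd v) | inr b => ccoord (snd x) b end.

Definition czero : cvec := (fun _ => 0, fun _ _ => 0).

Section Norms.
Variable pb : problem.

Lemma cnorm_lnorm x : cnorm pb x = lnorm (cidx pb) (ccoord x).
Proof. unfold cnorm, lnorm, cdot, cidx. now rewrite lsum_app, !lsum_map. Qed.

Lemma wnorm_lnorm x : wnorm pb x = lnorm (widx pb) (wcoord x).
Proof.
  unfold wnorm, wdot, zdot, lnorm, widx.
  rewrite lsum_app, !lsum_map. f_equal. f_equal.
  unfold cdot, cidx. now rewrite lsum_app, !lsum_map.
Qed.

Lemma wnorm_wsub x y : wnorm pb (wsub x y) = lnorm (widx pb) (fun a => wcoord x a - wcoord y a).
Proof.
  rewrite wnorm_lnorm. apply lnorm_ext.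
  intros [v|[r|v]]; unfold wsub, bsub, csub, cadd, cscal; simpl; ring.
Qed.

Lemma cnorm_scal c x : cnorm pb (cscal c x) = Rabs c * cnorm pb x.
Proof.
  rewrite !cnorm_lnorm, <- lnorm_scal.
  apply lnorm_ext; now intros [r|v].
Qed.

Lemma cnorm_czero : cnorm pb czero = 0.
Proof. rewrite cnorm_lnorm; apply lnorm0; now intros [r|v]. Qed.

Lemma snorm_vsub_diag x : snorm pb (vsub x x) = 0.
Proof. apply lnorm0; intros; unfold vsub; ring. Qed.

Lemma wnorm_triangle x y z : wnorm pb (wsub x z) <= wnorm pb (wsub x y) + wnorm pb (wsub y z).
Proof. rewrite !wnorm_wsub. apply lnorm_sub_triangle. Qed.

Lemma wnorm_wsubC x y : wnorm pb (wsub x y) = wnorm pb (wsub y x).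
Proof. rewrite !wnorm_wsub. apply lnorm_sub_sym. Qed.

Lemma znorm_le_wnorm x y : znorm pb (bsub (fst x) (fst y)) <= wnorm pb (wsub x y).
Proof.
  rewrite wnorm_lnorm. eapply Rle_trans; [|apply lnorm_app_l].
  now rewrite lnorm_map.
Qed.

Lemma cnorm_le_wnorm x y : cnorm pb (csub (snd x) (snd y)) <= wnorm pb (wsub x y).
Proof.
  rewrite wnorm_lnorm, cnorm_lnorm. eapply Rle_trans; [|apply lnorm_app_r].
  now rewrite lnorm_map.
Qed.

Lemma wnorm_le_znorm_cnorm x y :
  wnorm pb (wsub x y) <= znorm pb (bsub (fst x) (fst y)) + cnorm pb (csub (snd x) (snd y)).
Proof.
  rewrite wnorm_lnorm, cnorm_lnorm. eapply Rle_trans; [apply lnorm_app_le|].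
  now rewrite !lnorm_map.
Qed.

Lemma dsnorm_le d s : dsnorm pb d s <= cnorm pb d + snorm pb s.
Proof.
  apply sqrt_add_le.
  - unfold cdot; apply Rplus_le_le_0_compat; apply lsum_sq_ge0.
  - apply lsum_sq_ge0.
Qed.

End Norms.

Lemma in_bvars P dims i j : In (i, j) (bvars P dims) -> (i < P)%nat /\ (j < dims i)%nat.
Proof.
  unfold bvars. rewrite in_flat_map. intros [i' [Hi' Hj]].
  apply in_map_iff in Hj as [j' [E Hj']]. inversion E; subst.
  apply in_seq in Hi'; apply in_seq in Hj'. lia.
Qed.

Lemma in_inl_app {A B} (v : A) (l1 : list A) (l2 : list B) :
  In (inl v) (map inl l1 ++ map inr l2) -> In v l1.
Proof. rewrite in_app_iff, !in_map_iff. intros [[x [E H]]|[x [E H]]]; now inversion E; subst. Qed.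

Lemma in_inr_app {A B} (v : B) (l1 : list A) (l2 : list B) :
  In (inr v) (map inl l1 ++ map inr l2) -> In v l2.
Proof. rewrite in_app_iff, !in_map_iff. intros [[x [E H]]|[x [E H]]]; now inversion E; subst. Qed.

Section PointEquality.
Variable pb : problem.

Lemma weq_refl w : weq pb w w.
Proof. repeat split; auto. Qed.

Lemma weq_wcoord w w' a : weq pb w w' -> In a (widx pb) -> wcoord w a = wcoord w' a.
Proof.
  intros [Hz [Hm Hg]] Ha. destruct a as [[i j]|[r|[i j]]]; simpl.
  - apply in_inl_app, in_bvars in Ha. apply Hz; tauto.
  - apply in_inr_app, in_inl_app, in_seq in Ha. apply Hm; lia.
  - apply in_inr_app, in_inr_app, in_bvars in Ha. apply Hg; tauto.
Qed.

Lemma weq_wnorm_wsub w1 w1' w2 w2' :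
  weq pb w1 w1' -> weq pb w2 w2' -> wnorm pb (wsub w1 w2) = wnorm pb (wsub w1' w2').
Proof.
  intros H1 H2. rewrite !wnorm_wsub. apply lnorm_ext_in; intros a Ha.
  now rewrite (weq_wcoord _ _ _ H1 Ha), (weq_wcoord _ _ _ H2 Ha).
Qed.

Lemma weq_inZ w w' : weq pb w w' -> inZ pb (fst w') -> inZ pb (fst w).
Proof. intros [Hz _] HZ i j Hi Hj. rewrite Hz by auto. now apply HZ. Qed.

End PointEquality.

Lemma Hmap_czero pb rho w s : Hmap pb rho (snd w) w czero s = Fmap pb w s.
Proof.
  unfold Hmap, Fmap. f_equal.
  destruct (Gfun pb (fst w) s) as [g1 g2].
  unfold cadd, cscal, csub, czero; simpl. f_equal.
  - apply functional_extensionality; intros; ring.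
  - do 2 (apply functional_extensionality; intros); ring.
Qed.

Lemma cnorm_dk_le pb rho wbar wstar k :
  0 < rho -> cnorm pb (dk rho wbar wstar k) <= wnorm pb (wsub (wbar k) (wstar k)) / rho.
Proof.
  intros Hrho. unfold dk. rewrite cnorm_scal, Rabs_right by (left; apply Rinv_0_lt_compat, Hrho).
  unfold Rdiv; rewrite Rmult_comm.
  apply Rmult_le_compat_r; [left; apply Rinv_0_lt_compat, Hrho|].
  apply (cnorm_le_wnorm pb (wbar k) (wstar k)).
Qed.

Lemma wnorm_multiplier_update pb rho lamG mu s z z' :
  0 < rho -> G_lipschitz pb lamG -> inZ pb z -> inZ pb z' ->
  wnorm pb (wsub (z, cadd mu (cscal rho (Gfun pb z s))) (z', cadd mu (cscal rho (Gfun pb z' s))))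
  <= (1 + rho * lamG) * znorm pb (bsub z z').
Proof.
  intros Hrho [_ HGl] Hz Hz'.
  eapply Rle_trans; [apply wnorm_le_znorm_cnorm|]; simpl.
  replace (cnorm pb _) with (cnorm pb (cscal rho (csub (Gfun pb z s) (Gfun pb z' s)))).
  - rewrite cnorm_scal, Rabs_right by lra.
    pose proof (HGl s z z' Hz Hz').
    assert (0 <= znorm pb (bsub z z')) by apply sqrt_pos.
    nra.
  - rewrite !cnorm_lnorm. apply lnorm_ext; intros [r|v]; unfold csub, cadd, cscal; simpl; ring.
Qed.

Section SolutionMapB.
Variables (pb : problem) (rho : R) (s : nat -> vec) (wstar : nat -> pdvec).
Variables (dA rB qB lamB dB : R) (wB : nat -> cvec -> vec -> pdvec) (k : nat).
Hypothesis HB : hypB pb rho s wstar dA rB qB lamB dB wB.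

Lemma hypB_inZ d s' :
  cnorm pb d < qB -> snorm pb (vsub s' (s k)) < rB -> Sset pb s' -> inZ pb (fst (wB k d s')).
Proof.
  intros Hd Hs' HS. destruct HB as [_ [_ [_ [_ HBk]]]].
  destruct (HBk k) as [HBu _].
  now destruct (HBu d s' Hd Hs' HS) as [_ [[HZ _] _]].
Qed.

Hypothesis HKKT : KKT pb (wstar k) (s k).
Hypothesis HSk : Sset pb (s k).
Hypothesis HdA : 0 < dA.

(* Since H^{mu*_k}(w, 0, s) = F(w, s) at the reference multiplier, the KKT point w*_k
   is the (B)-solution for d = 0, s = s_k. *)
Lemma hypB_anchor : weq pb (wstar k) (wB k czero (s k)).
Proof.
  destruct HB as [HrB [HqB [_ [HdAB HBk]]]]. destruct (HBk k) as [HBu _].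
  apply (HBu czero (s k));
    [rewrite cnorm_czero; lra | rewrite snorm_vsub_diag; lra | exact HSk | |].
  - rewrite wnorm_wsub, lnorm0 by (intros; ring). lra.
  - unfold zero_in_plus_N. now rewrite Hmap_czero.
Qed.

Lemma hypB_dist_wstar lamH d s' :
  H_lipschitz pb rho lamH ->
  cnorm pb d < qB -> snorm pb (vsub s' (s k)) < rB -> Sset pb s' ->
  wnorm pb (wsub (wB k d s') (wstar k)) <= lamB * lamH * (cnorm pb d + snorm pb (vsub s' (s k))).
Proof.
  intros [HlamH HHl] Hd Hs' HS.
  pose proof HB as [HrB [HqB [HlamB [_ HBk]]]]. destruct (HBk k) as [_ HBl].
  rewrite (weq_wnorm_wsub pb _ _ _ _ (weq_refl pb _) hypB_anchor).
  eapply Rle_trans;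
    [apply HBl; auto; [rewrite cnorm_czero; lra | rewrite snorm_vsub_diag; lra]|].
  rewrite Rmult_assoc. apply Rmult_le_compat_l; [lra|].
  eapply Rle_trans; [apply HHl|]. apply Rmult_le_compat_l; [lra|].
  eapply Rle_trans; [apply dsnorm_le|].
  replace (cnorm pb (csub d czero)) with (cnorm pb d); [lra|].
  rewrite !cnorm_lnorm. apply lnorm_ext; intros [r|v]; unfold csub, cadd, cscal; simpl; ring.
Qed.

End SolutionMapB.

Section TrackingStep.
Variables (pb : problem) (rho : R) (s : nat -> vec) (wstar wbar : nat -> pdvec).
Variables (zinf : nat -> bvec) (lamH dA rB qB lamB dB : R).
Variables (wB : nat -> cvec -> vec -> pdvec) (k : nat).
Hypothesis Hrho : 0 < rho.
Hypothesis HS : forall j, Sset pb (s j).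
Hypothesis HKKT : KKT pb (wstar k) (s k).
Hypothesis HdA : 0 < dA.
Hypothesis HH : H_lipschitz pb rho lamH.
Hypothesis HB : hypB pb rho s wstar dA rB qB lamB dB wB.
Hypothesis Hwinf : cnorm pb (dk rho wbar wstar k) < qB -> snorm pb (vsub (s (S k)) (s k)) < rB ->
  weq pb (winf pb rho s wbar zinf k) (wB k (dk rho wbar wstar k) (s (S k))).

Local Notation werr := (wnorm pb (wsub (wbar k) (wstar k))).
Local Notation sstep := (snorm pb (vsub (s (S k)) (s k))).

Hypothesis Hsstep : sstep < rB.
Hypothesis Hwerr : werr < qB * rho.

Lemma cnorm_dk_lt : cnorm pb (dk rho wbar wstar k) < qB.
Proof.
  apply (Rle_lt_trans _ _ _ (cnorm_dk_le pb rho wbar wstar k Hrho)), (Rmult_lt_reg_r rho); [lra|].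
  unfold Rdiv; rewrite Rmult_assoc, Rinv_l by lra; lra.
Qed.

Lemma zinf_inZ : inZ pb (zinf k).
Proof.
  apply (weq_inZ pb (winf pb rho s wbar zinf k) _ (Hwinf cnorm_dk_lt Hsstep)).
  apply (hypB_inZ pb rho s wstar dA rB qB lamB dB wB k HB); auto using cnorm_dk_lt.
Qed.

Lemma winf_dist_wstar :
  wnorm pb (wsub (winf pb rho s wbar zinf k) (wstar k)) <= lamB * lamH * (werr / rho + sstep).
Proof.
  pose proof HB as [_ [_ [HlamB _]]]; pose proof HH as [HlamH _].
  rewrite (weq_wnorm_wsub pb _ _ _ _ (Hwinf cnorm_dk_lt Hsstep) (weq_refl pb _)).
  eapply Rle_trans;
    [apply (hypB_dist_wstar pb rho s wstar dA rB qB lamB dB wB k HB HKKT (HS k) HdA lamH);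
     auto using cnorm_dk_lt|].
  pose proof (cnorm_dk_le pb rho wbar wstar k Hrho).
  apply Rmult_le_compat_l; [nra | lra].
Qed.

Lemma zbar_dist_zinf :
  znorm pb (bsub (fst (wbar k)) (zinf k)) <= werr + lamB * lamH * (werr / rho + sstep).
Proof.
  eapply Rle_trans; [apply (znorm_le_wnorm pb (wbar k) (winf pb rho s wbar zinf k))|].
  eapply Rle_trans; [apply wnorm_triangle with (y := wstar k)|].
  rewrite (wnorm_wsubC pb (wstar k)). pose proof winf_dist_wstar. lra.
Qed.

End TrackingStep.

Theorem mainTheorem9
  (pb : problem) (rho : R) (M : nat) (alpha c0 : nat -> R) (beta : R)
  (s : nat -> vec) (wstar wbar : nat -> pdvec)
  (ztraj : nat -> nat -> bvec) (zinf : nat -> bvec)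
  (lamH lamG : R)
  (rA dA lamA : R) (wA : nat -> vec -> pdvec)
  (rB qB lamB dB : R) (wB : nat -> cvec -> vec -> pdvec)
  (C delta psi : R)
  (k : nat) :
  problem_wf pb ->
  0 < rho -> (1 <= M)%nat ->
  (forall i, 0 < alpha i) -> (forall i, 0 < c0 i) -> 1 < beta ->
  (forall j, Sset pb (s j)) ->
  (forall j, KKT pb (wstar j) (s j)) ->
  (forall j, inZ pb (fst (wbar j))) ->
  tracking_iterates pb rho M alpha c0 beta s wbar ztraj ->
  H_lipschitz pb rho lamH ->
  G_lipschitz pb lamG ->
  hypA pb s wstar rA dA lamA wA ->
  hypB pb rho s wstar dA rB qB lamB dB wB ->
  hypC pb rho M s wstar wbar ztraj zinf rB qB wB C delta psi ->
  snorm pb (vsub (s (S k)) (s k)) < rB ->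
  wnorm pb (wsub (wbar k) (wstar k)) < qB * rho ->
  (1 + lamH * lamB / rho) * wnorm pb (wsub (wbar k) (wstar k)) + lamH * lamB * rB < delta ->
  wnorm pb (wsub (wbar (S k)) (winf pb rho s wbar zinf k))
  <= C * (1 + rho * lamG) * Rpower (INR M) (- psi)
     * (lamB * lamH * snorm pb (vsub (s (S k)) (s k))
        + (1 + lamB * lamH / rho) * wnorm pb (wsub (wbar k) (wstar k))).
Proof.
  intros _ Hrho _ _ _ _ HS HKKT HZ Htr HH HG [_ [HdA _]] HB [HC [_ [_ HCk]]] Hs He Hdel.
  destruct (HCk k) as [_ [Hwinf Hcontract]], (Htr k) as [_ [_ [_ Hmu]]].
  pose proof HB as [_ [_ [HlamB _]]]; pose proof HH as [HlamH _].
  pose proof (zbar_dist_zinf pb rho s wstar wbar zinf lamH dA rB qB lamB dB wB k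
                Hrho HS (HKKT k) HdA HH HB Hwinf Hs He) as HX.
  set (e := wnorm pb (wsub (wbar k) (wstar k))) in *.
  set (ds := snorm pb (vsub (s (S k)) (s k))) in *.
  assert (He0 : 0 <= e) by (unfold e; rewrite wnorm_lnorm; apply lnorm_ge0).
  assert (Hds0 : 0 <= ds) by apply lnorm_ge0.
  assert (HXdelta : znorm pb (bsub (fst (wbar k)) (zinf k)) < delta).
  { assert (lamH * lamB * ds <= lamH * lamB * rB) by (apply Rmult_le_compat_l; nra).
    replace (e + lamB * lamH * (e / rho + ds))
      with ((1 + lamH * lamB / rho) * e + lamH * lamB * ds) in HX by (field; lra).
    lra. }
  rewrite (surjective_pairing (wbar (S k))), Hmu.
  eapply Rle_trans; [apply (wnorm_multiplier_update pb rho lamG); auto|].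
  { exact (zinf_inZ pb rho s wstar wbar zinf dA rB qB lamB dB wB k Hrho HS HB Hwinf Hs He). }
  assert (0 < Rpower (INR M) (- psi)) by apply exp_pos.
  assert (0 <= rho * lamG) by (destruct HG; nra).
  replace (C * (1 + rho * lamG) * Rpower (INR M) (- psi)
           * (lamB * lamH * ds + (1 + lamB * lamH / rho) * e))
    with ((1 + rho * lamG) * (C * Rpower (INR M) (- psi) * (e + lamB * lamH * (e / rho + ds))))
    by (field; lra).
  apply Rmult_le_compat_l; [lra|].
  eapply Rle_trans; [exact (Hcontract HXdelta)|].
  apply Rmult_le_compat_l; [nra | exact HX].
Qed.
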